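(* Let $\mathcal M$ satisfy Assumptions (A) and (RE). If a predictor $h(X,S)$ is counterfactually fair, then it satisfies statistical parity, i.e. $h(X,S)$ is independent of $S$. The converse does not hold in general: there exist an SCM satisfying (A) and (RE) and a predictor satisfying statistical parity that is not counterfactually fair.
   Context: Setting: a structural causal model $\mathcal M$ (exogenous random vector $U$, possibly with dependent components; structural equations $V_i=G_i(V_{\mathrm{Endo}(i)},U_{\mathrm{Exo}(i)})$ with measurable $G_i$) whose a.s. unique solution is $(X,S)$ with $X$ valued in $\mathcal X\subseteq\mathbb R^d$ and $S$ valued in a finite $\mathcal S\subset\mathbb R$ with $\mathbb P(S=s)>0$ for all $s$. Assumption (A): the causal graph (edge $k\to l$ iff $k$ is an endogenous or exogenous parent of $l$) is acyclic. $U_X,U_S$ denote the exogenous parents of $X$ and of $S$. For $s\in\mathcal S$, $X_{S=s}$ is the $X$-component of the solution of the model where the equation of $S$ is replaced by $S=s$, all else (including $U$) unchanged. $\mu_s:=\mathcal L(X\mid S=s)$, $\mathcal X_s:=\operatorname{supp}\mu_s$. Assumption (RE): $U_S$ is independent of $U_X$, and no component of $X$ is an endogenous parent of $S$. A predictor $\hat Y=h(X,S)$ with $h:\mathcal X\times\mathcal S\to\mathbb R$ measurable is counterfactually fair if for every $s,s'\in\mathcal S$ and $\mu_s$-almost every $x\in\mathcal X_s$, $\mathcal L(\hat Y_{S=s}\mid X=x,S=s)=\mathcal L(\hat Y_{S=s'}\mid X=x,S=s)$, where $\hat Y_{S=s}:=h(X_{S=s},s)$. *)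

From HB Require Import structures.
From mathcomp Require Import all_boot all_order all_algebra.
From mathcomp Require Import all_classical all_reals all_analysis.

Set Implicit Arguments.
Unset Strict Implicit.
Unset Printing Implicit Defensive.

Import Order.TTheory GRing.Theory Num.Theory.
Local Open Scope classical_set_scope.
Local Open Scope ring_scope.

(* Structural causal models with endogenous variables (X_1,...,X_d, S) and  *)
(* exogenous random vector U = (U_1,...,U_m), all real valued.              *)

Definition Xnode (d : nat) (i : 'I_d) : 'I_d.+1 := widen_ord (leqnSn d) i.
Definition Snode (d : nat) : 'I_d.+1 := ord_max.

(* G i is the structural function of node i; it takes the full endogenous   *)
(* vector and the full exogenous vector but only depends on the coordinates *)
(* in the (endogenous, resp. exogenous) parent sets Endo(i), Exo(i).        *)
Record SCM (R : realType) (d m : nat) := {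
  endo_par : 'I_d.+1 -> {set 'I_d.+1};
  exo_par  : 'I_d.+1 -> {set 'I_m};
  G : 'I_d.+1 -> (d.+1).-tuple R * m.-tuple R -> R;
  G_measurable : forall i, measurable_fun [set: (d.+1).-tuple R * m.-tuple R] (G i);
  G_local : forall i (v v' : (d.+1).-tuple R) (u u' : m.-tuple R),
    (forall k, k \in endo_par i -> tnth v k = tnth v' k) ->
    (forall j, j \in exo_par i -> tnth u j = tnth u' j) ->
    G i (v, u) = G i (v', u')
}.

Definition causal_edge R d m (M : SCM R d m) : rel ('I_d.+1 + 'I_m)%type :=
  fun k l => match l with
             | inl i => match k with
                        | inl k' => k' \in endo_par M i
                        | inr j => j \in exo_par M i
                        end
             | inr _ => false
             end.

Definition acyclic R d m (M : SCM R d m) : Prop :=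
  forall k l, causal_edge M k l -> ~~ connect (causal_edge M) l k.

Section Probabilistic.
Context {R : realType} {dO : measure_display} {O : measurableType dO}.
Variable P : probability O R.

Definition sigma_gen (F : set (O -> R)) : set (set O) :=
  <<s [set E | exists f B, F f /\ measurable B /\ E = f @^-1` B] >>.

Definition indep (F1 F2 : set (set O)) : Prop :=
  forall A B, F1 A -> F2 B -> P (A `&` B) = (P A * P B)%E.

Variables (d m : nat) (M : SCM R d m) (U : O -> m.-tuple R).

Definition Ucoords (J : set 'I_m) : set (O -> R) :=
  [set f | exists2 j, J j & f = (fun w => tnth (U w) j)].

Definition RE : Prop :=
  indep (sigma_gen (Ucoords [set j | j \in exo_par M (Snode d)]))
        (sigma_gen (Ucoords [set j | exists i : 'I_d, j \in exo_par M (Xnode i)]))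
  /\ (forall i : 'I_d, Xnode i \notin endo_par M (Snode d)).

Definition solves (V : O -> (d.+1).-tuple R) : Prop :=
  {ae P, forall w, forall i, tnth (V w) i = G M i (V w, U w)}.

Definition unique_solution (V : O -> (d.+1).-tuple R) : Prop :=
  [/\ measurable_fun [set: O] V, solves V &
      forall V' : O -> (d.+1).-tuple R,
        measurable_fun [set: O] V' -> solves V' -> {ae P, forall w, V' w = V w}].

Definition intervened_solution (s : R) (V : O -> (d.+1).-tuple R) : Prop :=
  measurable_fun [set: O] V /\
  {ae P, forall w, tnth (V w) (Snode d) = s /\
           forall i : 'I_d, tnth (V w) (Xnode i) = G M (Xnode i) (V w, U w)}.

Definition Xof (V : O -> (d.+1).-tuple R) (w : O) : d.-tuple R :=
  [tuple tnth (V w) (Xnode i) | i < d].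
Definition Sof (V : O -> (d.+1).-tuple R) (w : O) : R := tnth (V w) (Snode d).

Definition setting (V : O -> (d.+1).-tuple R) (Sset : seq R) : Prop :=
  [/\ measurable_fun [set: O] U, unique_solution V,
      (forall w, Sof V w \in Sset) &
      (forall s, s \in Sset -> (0 < P [set w | Sof V w = s])%E)].

(* K is a version of the conditional law L(Y | X = x, E), i.e. for all      *)
(* Borel A, B:  P(E, X in A, Y in B) = int_{E /\ X in A} K(X w)(B) dP(w)     *)
(* (equivalently, after dividing by P(E), the defining identity of a         *)
(* regular conditional distribution under P( . | E)).                        *)
Definition cond_law_version (Y : O -> R) (X : O -> d.-tuple R) (E : set O)
    (K : R.-pker (d.-tuple R) ~> R) : Prop :=
  forall (A : set (d.-tuple R)) (B : set R), measurable A -> measurable B ->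
    P (E `&` X @^-1` A `&` Y @^-1` B) = (\int[P]_(w in E `&` X @^-1` A) K (X w) B)%E.

Definition cond_X_law (V : O -> (d.+1).-tuple R) (s : R) : set (d.-tuple R) -> \bar R :=
  fun A => (P ([set w | Sof V w = s] `&` Xof V @^-1` A)
            * ((fine (P [set w | Sof V w = s]))^-1)%:E)%E.

Definition Yhat_do (Vint : R -> O -> (d.+1).-tuple R) (h : d.-tuple R * R -> R)
    (s : R) (w : O) : R := h (Xof (Vint s) w, s).

Definition counterfactually_fair (V : O -> (d.+1).-tuple R)
    (Vint : R -> O -> (d.+1).-tuple R) (Sset : seq R)
    (h : d.-tuple R * R -> R) : Prop :=
  forall s s', s \in Sset -> s' \in Sset ->
    exists K K' : R.-pker (d.-tuple R) ~> R,
      [/\ cond_law_version (Yhat_do Vint h s) (Xof V) [set w | Sof V w = s] K,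
          cond_law_version (Yhat_do Vint h s') (Xof V) [set w | Sof V w = s] K' &
          {ae cond_X_law V s, forall x, forall B, measurable B -> K x B = K' x B}].

Definition statistical_parity (V : O -> (d.+1).-tuple R)
    (h : d.-tuple R * R -> R) : Prop :=
  indep (sigma_gen [set fun w => h (Xof V w, Sof V w)])
        (sigma_gen [set Sof V]).

End Probabilistic.

From mathcomp Require Import all_boot all_order all_algebra.
From mathcomp Require Import all_classical all_reals all_analysis.
From mathcomp Require Import measurable_realfun.
From mathcomp Require Import ring lra.
Import Order.TTheory GRing.Theory Num.Theory.
Local Open Scope classical_set_scope.
Local Open Scope ring_scope.

(* Under acyclicity, the equations of the model in which S is set to s have,
   for every value u of the noise, exactly one solution F_s(u), reached by
   iterating the equations once per node of the causal graph; F_s(u) depends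
   only on the noise U_X of the features, while (RE) makes S = g(U_S).  Hence,
   for s, s' in the range of S and Borel B,
     P(S = s, h(X,S) in B) = P(S = s, Yhat_s in B)     (X = X_{S=s} on S = s)
                           = P(S = s, Yhat_s' in B)    (counterfactual fairness)
                           = P(S = s) P(Yhat_s' in B)  (Yhat_s' = h(F_s'(U), s)),
   and summing over s gives the independence of h(X,S) and S.  For the
   converse take two fair coins U_1, U_2, S = U_1, X = S xor U_2 and
   h(X,S) = X: X is a fair coin independent of S, but given S = 0 and X = x
   the counterfactual predictions are Yhat_0 = x and Yhat_1 = 1 - x. *)

Lemma measurable_preimage {d1 d2} {T1 : measurableType d1} {T2 : measurableType d2}
    {f : T1 -> T2} {B : set T2} :
  measurable_fun setT f -> measurable B -> measurable (f @^-1` B).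
Proof. by move=> mf mB; rewrite -[f @^-1` B]setTI; exact: mf. Qed.

Lemma set_seq_cons (T : eqType) (x : T) (l : seq T) : [set` x :: l] = [set x] `|` [set` l].
Proof.
apply/seteqP; split => y /=; rewrite in_cons.
  by case/orP => [/eqP|]; [left|right].
by case => [->|yl]; rewrite ?eqxx ?yl ?orbT.
Qed.

Section measure_lemmas.
Context {d} {T : measurableType d} {R : realType} {mu : {measure set T -> \bar R}}.

Lemma ae_not_null {N : set T} : measurable N -> mu N = 0%E -> {ae mu, forall w, ~ N w}.
Proof. by move=> mN N0; exists N; split => // w /= /contrapT. Qed.

Lemma ae_iff_measure (A B : set T) :
  measurable A -> measurable B -> {ae mu, forall w, A w <-> B w} -> mu A = mu B.
Proof.
move=> mA mB [N [mN N0 ABN]].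
rewrite -(measureU0 mA mN N0) -(measureU0 mB mN N0); congr (mu _).
apply/seteqP; split=> w [Cw|Nw]; try by right.
all: have [[AB BA]|/ABN] := pselect (A w <-> B w); [left; auto|by right].
Qed.

Lemma measurable_preimage_seq (X : eqType) (Y : T -> X) (l : seq X) :
  {in l, forall x, measurable (Y @^-1` [set x])} -> measurable (Y @^-1` [set` l]).
Proof.
elim: l => [_|x l IH ml]; first by rewrite set_nil preimage_set0.
rewrite set_seq_cons preimage_setU; apply: measurableU; first by apply: ml; rewrite mem_head.
exact/IH/(sub_in1 (@mem_behead _ (x :: l))).
Qed.

Lemma measure_setI_preimage_seq (X : eqType) (Y : T -> X) (A : set T) (c : \bar R)
    (l : seq X) :
  measurable A -> {in l, forall x, measurable (Y @^-1` [set x])} -> uniq l ->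
  {in l, forall x, mu (A `&` Y @^-1` [set x]) = (mu (Y @^-1` [set x]) * c)%E} ->
  mu (A `&` Y @^-1` [set` l]) = (mu (Y @^-1` [set` l]) * c)%E.
Proof.
move=> mA; elim: l => [_ _ _|x l IH ml /andP[xl ul] Al].
  by rewrite set_nil preimage_set0 setI0 measure0 mul0e.
have lxl := @mem_behead _ (x :: l).
have mx : measurable (Y @^-1` [set x]) by apply: ml; rewrite mem_head.
have mYl : measurable (Y @^-1` [set` l]) by exact/measurable_preimage_seq/(sub_in1 lxl).
have disj : Y @^-1` [set x] `&` Y @^-1` [set` l] = set0.
  by apply/seteqP; split => w // [/= -> xl']; rewrite xl' in xl.
rewrite set_seq_cons preimage_setU.
have -> : mu (A `&` (Y @^-1` [set x] `|` Y @^-1` [set` l])) =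
          (mu (A `&` Y @^-1` [set x]) + mu (A `&` Y @^-1` [set` l]))%E.
  rewrite setIUr measureU //; try exact: measurableI.
  by rewrite setIACA disj setI0.
rewrite Al ?mem_head // (IH (sub_in1 lxl ml) ul (sub_in1 lxl Al)).
by rewrite measureU // ge0_muleDl.
Qed.

End measure_lemmas.

Section generated_sigma_algebras.
Context {R : realType} {dO : measure_display} {O : measurableType dO}.

Lemma sigma_gen1P (f : O -> R) (E : set O) :
  sigma_gen [set f] E -> exists2 B, measurable B & E = f @^-1` B.
Proof.
move=> fE; have : preimage_set_system setT f measurable E.
  apply: (smallest_sub _ _ fE).
    exact/sigma_algebra_preimage/sigma_algebra_measurable.
  by move=> _ [_ [B [-> [mB ->]]]]; exists B; rewrite ?setTI.
by case=> B mB <-; exists B; rewrite ?setTI.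
Qed.

Lemma indep_sigma_gen1 (P : probability O R) (f g : O -> R) :
  (forall B C, measurable B -> measurable C ->
     P (f @^-1` B `&` g @^-1` C) = (P (f @^-1` B) * P (g @^-1` C))%E) ->
  indep P (sigma_gen [set f]) (sigma_gen [set g]).
Proof. by move=> fg _ _ /sigma_gen1P [B mB ->] /sigma_gen1P [C mC ->]; exact: fg. Qed.

Variables (m : nat) (U : O -> m.-tuple R).

Definition mask_tuple (J : set 'I_m) (u : m.-tuple R) : m.-tuple R :=
  [tuple if `[< J j >] then tnth u j else 0 | j < m].

Lemma sigma_gen_Ucoords_mask (J : set 'I_m) (D : set (m.-tuple R)) :
  measurable D -> sigma_gen (Ucoords U J) ((mask_tuple J \o U) @^-1` D).
Proof.
move=> mD; rewrite -[_ @^-1` D]setTI.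
have sG : sigma_algebra setT (sigma_gen (Ucoords U J)) by exact: smallest_sigma_algebra.
(* the sigma-algebra on tuples is, by definition, generated by the coordinates *)
have mD' : g_sigma_preimage (fun i (u : m.-tuple R) => tnth u i) D := mD.
apply: (smallest_sub (sigma_algebra_image (mask_tuple J \o U) sG) _ mD').
rewrite -bigcup_seq => _ [i _ [Y mY <-]]; rewrite /image_set_system /= !setTI.
rewrite (_ : _ @^-1` _ = (fun w => if `[< J i >] then tnth (U w) i else 0) @^-1` Y);
  last by apply/seteqP; split => w; rewrite /= tnth_mktuple.
have [Ji|nJi] := pselect (J i).
  rewrite (asboolT Ji); apply: sub_sigma_algebra.
  by exists (fun w => tnth (U w) i), Y; split => //; exists i.
rewrite (asboolF nJi) preimage_cst.
by case: ifP => _; [rewrite -setC0; apply: sigma_algebraC|]; exact: sigma_algebra0.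
Qed.

Lemma sigma_gen_Ucoords_local (J : set 'I_m) d' (T : measurableType d')
    (g : m.-tuple R -> T) (C : set T) :
  measurable_fun setT g ->
  (forall u u', (forall j, J j -> tnth u j = tnth u' j) -> g u = g u') ->
  measurable C -> sigma_gen (Ucoords U J) ((g \o U) @^-1` C).
Proof.
move=> mg gJ mC.
have -> : (g \o U) @^-1` C = (mask_tuple J \o U) @^-1` (g @^-1` C).
  by apply/seteqP; split => w; rewrite /= (gJ (U w) (mask_tuple J (U w))) // => j Jj;
    rewrite tnth_mktuple asboolT.
by apply: sigma_gen_Ucoords_mask; exact: measurable_preimage.
Qed.

End generated_sigma_algebras.

Section conditional_laws.
Context {R : realType} {dO : measure_display} {O : measurableType dO}.
Context {P : probability O R} {d : nat}.

Lemma cond_law_versions_eq {Y Y' : O -> R} {X : O -> d.-tuple R} {E : set O}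
    {K K' : R.-pker (d.-tuple R) ~> R} {A : set (d.-tuple R)} {B : set R} :
  cond_law_version P Y X E K -> cond_law_version P Y' X E K' ->
  (forall x, A x -> forall B, measurable B -> K x B = K' x B) ->
  measurable A -> measurable B ->
  P (E `&` X @^-1` A `&` Y @^-1` B) = P (E `&` X @^-1` A `&` Y' @^-1` B).
Proof.
move=> YK Y'K' KK' mA mB; rewrite YK // Y'K' //.
by apply: eq_integral => w; rewrite in_setE => -[_ /KK'->].
Qed.

Lemma cond_X_law_null {V : O -> (d.+1).-tuple R} {s : R} {N : set (d.-tuple R)} :
  measurable [set w | Sof V w = s] -> (0 < P [set w | Sof V w = s])%E ->
  cond_X_law P V s N = 0%E -> P ([set w | Sof V w = s] `&` Xof V @^-1` N) = 0%E.
Proof.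
move=> mE PE /eqP; rewrite mule_eq0 => /orP[/eqP //|]; rewrite eqe invr_eq0.
have PEfin : (P [set w | Sof V w = s] < +oo)%E.
  exact: le_lt_trans (probability_le1 _ mE) (ltry _).
by rewrite gt_eqF // fine_gt0 // PE PEfin.
Qed.

End conditional_laws.

Definition Xproj {R : realType} {d : nat} (v : (d.+1).-tuple R) : d.-tuple R :=
  [tuple tnth v (Xnode i) | i < d].

Lemma measurable_Xproj {R : realType} {d : nat} : measurable_fun setT (@Xproj R d).
Proof.
apply/measurable_fun_tnthP => i.
rewrite (_ : _ \o _ = fun v => tnth v (Xnode i)); first exact: measurable_tnth.
by apply/funext => v /=; rewrite tnth_mktuple.
Qed.

Lemma neq_Snode_Xnode (d : nat) (i : 'I_d.+1) : i != Snode d -> exists j : 'I_d, i = Xnode j.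
Proof.
move=> iS; have lt_id : (i < d)%N.
  by rewrite ltn_neqAle -ltnS ltn_ord andbT; apply: contra iS => /eqP id; apply/eqP/val_inj.
by exists (Ordinal lt_id); apply: val_inj.
Qed.

Lemma connect_rank {T : finType} {e : rel T} {f : T -> nat} :
  (forall x y, e x y -> f x < f y)%N -> forall x y, connect e x y -> (f x <= f y)%N.
Proof.
move=> fe x y /connectP [p]; elim: p x => [_ _ ->//|z p IH] x /= /andP[/fe xz zp] yl.
exact: leq_trans (ltnW xz) (IH z zp yl).
Qed.

Lemma acyclic_rank {R d m} {M : SCM R d m} (f : 'I_d.+1 + 'I_m -> nat) :
  (forall k l, causal_edge M k l -> (f k < f l)%N) -> acyclic M.
Proof. by move=> fe k l kl; apply/negP => /(connect_rank fe); rewrite leqNgt fe. Qed.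

Section do_solution.
Context {R : realType} {d m : nat} (M : SCM R d m).

Definition do_step (s : R) (u : m.-tuple R) (v : (d.+1).-tuple R) : (d.+1).-tuple R :=
  [tuple if i == Snode d then s else G M i (v, u) | i < d.+1].

Definition do_solution (s : R) (u : m.-tuple R) : (d.+1).-tuple R :=
  iter #|{: 'I_d.+1 + 'I_m}| (do_step s u) [tuple 0 | _ < d.+1].

Lemma do_solution_local s {u u' : m.-tuple R} :
  (forall j, (exists i : 'I_d, j \in exo_par M (Xnode i)) -> tnth u j = tnth u' j) ->
  do_solution s u = do_solution s u'.
Proof.
move=> uu'; rewrite /do_solution; elim: #|_| => [//|k IH]; rewrite !iterS IH.
apply: eq_from_tnth => i; rewrite !tnth_mktuple.
have [//|/neq_Snode_Xnode [j ->]] := eqVneq i (Snode d).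
by apply: G_local => // j' j'i; apply: uu'; exists j.
Qed.

Lemma measurable_do_solution s : measurable_fun setT (do_solution s).
Proof.
rewrite /do_solution; elim: #|_| => [|k IH] /=; first exact: measurable_cst.
apply/measurable_fun_tnthP => i.
rewrite (_ : _ \o _ = fun u =>
    if i == Snode d then s else G M i (iter k (do_step s u) [tuple 0 | _ < d.+1], u));
  last by apply/funext => u /=; rewrite tnth_mktuple.
case: (i == Snode d); first exact: measurable_cst.
by apply: measurableT_comp; [exact: G_measurable|exact: measurable_fun_pair].
Qed.

Definition nancestors (i : 'I_d.+1) : nat :=
  #|[pred k | connect (causal_edge M) k (inl i)]|.

Hypothesis acM : acyclic M.

Lemma nancestors_lt i j : j \in endo_par M i -> (nancestors j < nancestors i)%N.
Proof.
move=> ji; apply/proper_card/properP; split.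
  by apply/fintype.subsetP => k; rewrite !inE => /connect_trans; apply; exact: connect1.
by exists (inl i); rewrite inE ?connect0 //; exact: (acM (inl j) (inl i)).
Qed.

(* Node i has its final value after nancestors i rounds of do_step. *)
Lemma do_solution_unique s u (v : (d.+1).-tuple R) :
  tnth v (Snode d) = s ->
  (forall i : 'I_d, tnth v (Xnode i) = G M (Xnode i) (v, u)) ->
  do_solution s u = v.
Proof.
move=> vS vX.
suff iter_v k i : (nancestors i <= k)%N ->
    tnth (iter k (do_step s u) [tuple 0 | _ < d.+1]) i = tnth v i.
  by apply: eq_from_tnth => i; apply: iter_v; exact: max_card.
elim: k i => [|k IH] i.
  by rewrite leqn0 => /eqP/card0_eq/(_ (inl i)); rewrite !inE connect0.
move=> ik; rewrite iterS tnth_mktuple.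
have [->//|/neq_Snode_Xnode [j ij]] := eqVneq i (Snode d).
rewrite ij vX -ij; apply: G_local => // k' k'i.
by apply: IH; rewrite -ltnS; exact: leq_trans (nancestors_lt _ _ k'i) ik.
Qed.

End do_solution.

Lemma probability_inhabited {d} {T : measurableType d} {R : realType} (P : probability T R) :
  inhabited T.
Proof.
apply: contrapT => noT; have T0 : [set: T] = set0.
  by apply/seteqP; split => // w _; apply: noT.
by have := probability_setT P; rewrite T0 measure0 => -[] /eqP; rewrite eq_sym oner_eq0.
Qed.

Lemma measurable_Xof {R : realType} {d : nat} {dO : measure_display} {O : measurableType dO}
    {W : O -> (d.+1).-tuple R} :
  measurable_fun setT W -> measurable_fun setT (Xof W).
Proof. exact: measurableT_comp measurable_Xproj. Qed.

Section counterfactual_fairness_parity.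
Context {R : realType} {d m : nat} {dO : measure_display} {O : measurableType dO}
  (P : probability O R) (M : SCM R d m) (U : O -> m.-tuple R)
  (V : O -> (d.+1).-tuple R) (Vint : R -> O -> (d.+1).-tuple R)
  (Sset : seq R) (h : d.-tuple R * R -> R).
Hypotheses (acM : acyclic M) (REM : RE P M U).
Hypotheses (mU : measurable_fun setT U) (mV : measurable_fun setT V).
Hypotheses (solV : solves P M U V) (SsetV : forall w, Sof V w \in Sset).
Hypothesis PS_gt0 : forall s, s \in Sset -> (0 < P [set w | Sof V w = s])%E.
Hypothesis Vint_sol : forall s, s \in Sset -> intervened_solution P M U s (Vint s).
Hypotheses (mh : measurable_fun setT h) (cfh : counterfactually_fair P V Vint Sset h).

Definition fS (u : m.-tuple R) : R := G M (Snode d) ([tuple 0 | _ < d.+1], u).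

Lemma Snode_endo_free k : k \notin endo_par M (Snode d).
Proof.
have [->|/neq_Snode_Xnode [i ->]] := eqVneq k (Snode d); last exact: REM.2.
by apply/negP => SS; have := acM (inl (Snode d)) (inl (Snode d)) SS; rewrite connect0.
Qed.

Lemma G_SnodeE v u : G M (Snode d) (v, u) = fS u.
Proof. by apply: G_local => // k; rewrite (negbTE (Snode_endo_free k)). Qed.

Lemma measurable_fS : measurable_fun setT fS.
Proof. by apply: measurableT_comp; [exact: G_measurable|exact: measurable_fun_pair]. Qed.

Lemma measurable_Sof : measurable_fun setT (Sof V).
Proof. exact: measurableT_comp (measurable_tnth _) mV. Qed.

Lemma measurable_S_eq s : measurable [set w | Sof V w = s].
Proof. exact: measurable_preimage measurable_Sof (measurable_set1 s). Qed.

Lemma measurable_hXS : measurable_fun setT (fun w => h (Xof V w, Sof V w)).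
Proof.
apply: (measurableT_comp (f := h) (g := fun w => (Xof V w, Sof V w))) => //.
by apply: measurable_fun_pair; [exact: measurable_Xof|exact: measurable_Sof].
Qed.

Lemma measurable_Yhat {s} : s \in Sset -> measurable_fun setT (Yhat_do Vint h s).
Proof.
case/Vint_sol => mVs _.
apply: (measurableT_comp (f := h) (g := fun w => (Xof (Vint s) w, s))) => //.
by apply: measurable_fun_pair; [exact: measurable_Xof|exact: measurable_cst].
Qed.

Lemma V_do_solution : {ae P, forall w, V w = do_solution M (Sof V w) (U w)}.
Proof.
by apply: filterS solV => w Vw; symmetry; apply: do_solution_unique => // i; exact: Vw.
Qed.

Lemma Sof_fS : {ae P, forall w, Sof V w = fS (U w)}.
Proof. by apply: filterS solV => w Vw; rewrite /Sof Vw G_SnodeE. Qed.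

Lemma Vint_do_solution {s} :
  s \in Sset -> {ae P, forall w, Vint s w = do_solution M s (U w)}.
Proof.
by case/Vint_sol => _; apply: filterS => w [VS VX]; symmetry; exact: do_solution_unique.
Qed.

Lemma consistency s B : s \in Sset -> measurable B ->
  P ([set w | Sof V w = s] `&` (fun w => h (Xof V w, Sof V w)) @^-1` B) =
  P ([set w | Sof V w = s] `&` Yhat_do Vint h s @^-1` B).
Proof.
move=> sS mB; apply: ae_iff_measure.
- apply: measurableI; first exact: measurable_S_eq.
  by apply: measurable_preimage => //; exact: measurable_hXS.
- apply: measurableI; first exact: measurable_S_eq.
  by apply: measurable_preimage => //; exact: measurable_Yhat.
apply: (filterS2 _ _ V_do_solution (Vint_do_solution sS)) => w VF VintF.
by split => -[Vs]; rewrite /= /Yhat_do /Xof VF Vs -VintF.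
Qed.

Lemma counterfactual_swap s s' B : s \in Sset -> s' \in Sset -> measurable B ->
  P ([set w | Sof V w = s] `&` Yhat_do Vint h s @^-1` B) =
  P ([set w | Sof V w = s] `&` Yhat_do Vint h s' @^-1` B).
Proof.
move=> sS s'S mB; have [K [K' [YK Y'K' [N [mN N0 KK'N]]]]] := cfh s s' sS s'S.
have KK' x : ~ N x -> forall B, measurable B -> K x B = K' x B.
  by move=> nNx; apply: contrapT => /KK'N.
have mE := measurable_S_eq s.
have mXN : measurable (Xof V @^-1` N) := measurable_preimage (measurable_Xof mV) mN.
(* N is negligible for L(X | S = s), hence so is [X in N] on [S = s]; off it
   the two kernels agree. *)
have EN0 := cond_X_law_null mE (PS_gt0 s sS) N0.
suff off_N Y : measurable_fun setT Y -> P ([set w | Sof V w = s] `&` Y @^-1` B) =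
    P ([set w | Sof V w = s] `&` Xof V @^-1` (~` N) `&` Y @^-1` B).
  rewrite !off_N; try exact: measurable_Yhat.
  exact: (cond_law_versions_eq YK Y'K' KK' (measurableC mN) mB).
move=> mY; have mYB := measurable_preimage mY mB; apply: ae_iff_measure.
- exact: measurableI.
- apply: measurableI => //; apply: measurableI => //.
  by rewrite preimage_setC; exact: measurableC.
apply: filterS (ae_not_null (measurableI _ _ mE mXN) EN0) => w ENw.
by split => [[Es Yw]|[[Es _] Yw]] //; split => //; split => // XNw; exact: ENw.
Qed.

Lemma indep_S_Yhat s s' B : s \in Sset -> s' \in Sset -> measurable B ->
  P ([set w | Sof V w = s] `&` Yhat_do Vint h s' @^-1` B) =
  (P [set w | Sof V w = s] * P (Yhat_do Vint h s' @^-1` B))%E.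
Proof.
move=> sS s'S mB; pose g u := h (Xproj (do_solution M s' u), s').
have mg : measurable_fun setT g.
  apply: (measurableT_comp (f := h) (g := fun u => (Xproj (do_solution M s' u), s'))) => //.
  apply: measurable_fun_pair (measurable_cst _).
  exact: measurableT_comp measurable_Xproj (measurable_do_solution M s').
have Yhat_g : {ae P, forall w, Yhat_do Vint h s' w = g (U w)}.
  by apply: filterS (Vint_do_solution s'S) => w Vw; rewrite /Yhat_do /g -Vw.
have mE := measurable_S_eq s.
have mY := measurable_preimage (measurable_Yhat s'S) mB.
have mE' := measurable_preimage (measurableT_comp measurable_fS mU) (measurable_set1 s).
have mY' := measurable_preimage (measurableT_comp mg mU) mB.
have -> : P [set w | Sof V w = s] = P ((fS \o U) @^-1` [set s]).
  by apply: ae_iff_measure => //; apply: filterS Sof_fS => w /= ->.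
have -> : P (Yhat_do Vint h s' @^-1` B) = P ((g \o U) @^-1` B).
  by apply: ae_iff_measure => //; apply: filterS Yhat_g => w /= ->.
rewrite -REM.1.
- apply: ae_iff_measure; [exact: measurableI|exact: measurableI|].
  by apply: (filterS2 _ _ Sof_fS Yhat_g) => w /= -> ->.
- apply: sigma_gen_Ucoords_local => //; first exact: measurable_fS.
  by move=> u u' uu'; exact: G_local.
- by apply: sigma_gen_Ucoords_local => // u u' uu'; rewrite /g (do_solution_local M s' uu').
Qed.

Lemma statistical_parity_of_cf : statistical_parity P V h.
Proof.
have [w0] := probability_inhabited P; set s0 := Sof V w0.
apply: indep_sigma_gen1 => B C mB _.
have hXS_S D : P ((fun w => h (Xof V w, Sof V w)) @^-1` B `&` Sof V @^-1` D) =
    (P (Sof V @^-1` D) * P (Yhat_do Vint h s0 @^-1` B))%E.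
  have -> : Sof V @^-1` D = Sof V @^-1` [set` [seq x <- undup Sset | `[< D x >]]].
    by apply/seteqP; split => w /=; rewrite mem_filter mem_undup SsetV andbT => /asboolP.
  apply: measure_setI_preimage_seq.
  - exact: measurable_preimage measurable_hXS mB.
  - by move=> x _; exact: measurable_S_eq.
  - by rewrite filter_uniq ?undup_uniq.
  move=> x; rewrite mem_filter mem_undup => /andP[_ xS].
  rewrite setIC; apply: etrans (consistency x B xS mB) _.
  by rewrite (counterfactual_swap x s0) ?SsetV // indep_S_Yhat ?SsetV.
rewrite hXS_S; have := hXS_S setT.
by rewrite preimage_setT setIT probability_setT mul1e => ->; rewrite muleC.
Qed.

End counterfactual_fairness_parity.

Section counterexample.
Variable R : realType.

(* Endogenous nodes: X = 0 = Xnode ord0 and S = 1 = Snode 1; noise: U_1 at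
   index 0 drives S and U_2 at index 1 drives X.  The equation of X is
   X = S + U_2 - 2 S U_2, i.e. S xor U_2 on {0, 1}. *)
Definition xor_G (i : 'I_2) (vu : 2.-tuple R * 2.-tuple R) : R :=
  if i == Snode 1 then tnth vu.2 ord0
  else tnth vu.1 (Snode 1) + tnth vu.2 ord_max - 2 * tnth vu.1 (Snode 1) * tnth vu.2 ord_max.

Definition xor_endo_par (i : 'I_2) : {set 'I_2} :=
  if i == Snode 1 then finset.set0 else [set Snode 1]%SET.

Definition xor_exo_par (i : 'I_2) : {set 'I_2} :=
  if i == Snode 1 then [set ord0]%SET else [set ord_max]%SET.

Lemma measurable_xor_G i : measurable_fun setT (xor_G i).
Proof.
rewrite /xor_G; case: (i == Snode 1).
  exact: measurableT_comp (measurable_tnth _) measurable_snd.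
have mS : measurable_fun setT (fun vu : 2.-tuple R * 2.-tuple R => tnth vu.1 (Snode 1)).
  exact: measurableT_comp (measurable_tnth _) measurable_fst.
have mU2 : measurable_fun setT (fun vu : 2.-tuple R * 2.-tuple R => tnth vu.2 ord_max).
  exact: measurableT_comp (measurable_tnth _) measurable_snd.
apply: measurable_funB; first exact: measurable_funD.
by apply: measurable_funM => //; apply: measurable_funM.
Qed.

Lemma xor_G_local i (v v' u u' : 2.-tuple R) :
  (forall k, k \in xor_endo_par i -> tnth v k = tnth v' k) ->
  (forall j, j \in xor_exo_par i -> tnth u j = tnth u' j) ->
  xor_G i (v, u) = xor_G i (v', u').
Proof.
rewrite /xor_G /xor_endo_par /xor_exo_par /=; case: (i == Snode 1) => vv' uu'.
  by rewrite uu' // inE.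
by rewrite vv' ?inE // uu' ?inE.
Qed.

Definition xor_scm : SCM R 1 2 := Build_SCM measurable_xor_G xor_G_local.

Lemma xor_scm_acyclic : acyclic xor_scm.
Proof.
apply: (acyclic_rank (fun k => if k is inl i then (i == Xnode ord0).+1 else 0%N)).
move=> [k|j] [i|j'] //=; rewrite /xor_endo_par.
have [//|/neq_Snode_Xnode [i' ->]] := eqVneq i (Snode 1); first by rewrite inE.
by rewrite (ord1 i') inE => /eqP ->.
Qed.

Local Notation coin := (bernoulli_prob (1 / 2 : R)).
Definition coins : probability (bool * bool)%type R := (coin \x coin)%E.

Lemma coinE (B : set bool) : coin B = (((true \in B)%:R + (false \in B)%:R) / 2)%:E.
Proof.
have p01 : 0 <= (1 / 2 : R) <= 1.
  by apply/andP; split; rewrite ?divr_ge0 // ler_pdivrMr // mul1r ler1n.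
by rewrite bernoulli_probE // !diracE -!EFinM -EFinD /unstable.onem; congr EFin; field.
Qed.

Lemma bool2_decomp (A : set (bool * bool)) :
  A = [set true] `*` [set b | A (true, b)] `|` [set false] `*` [set b | A (false, b)].
Proof.
apply/seteqP; split => [[[] b] Ab|[a b] [[/= -> //]|[/= -> //]]]; by [left|right].
Qed.

Lemma measurable_bool2 (A : set (bool * bool)) : measurable A.
Proof. by rewrite (bool2_decomp A); apply: measurableU; apply: measurableX. Qed.

Lemma measurable_fun_bool2 d (T : measurableType d) (f : bool * bool -> T) :
  measurable_fun setT f.
Proof. by move=> _ Y _; exact: measurable_bool2. Qed.

Lemma coinsE (A : set (bool * bool)) : coins A =
  ((((true, true) \in A)%:R + ((true, false) \in A)%:R
   + ((false, true) \in A)%:R + ((false, false) \in A)%:R) / 4)%:E.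
Proof.
rewrite -[coins A]/((coin \x coin)%E A) {1}(bool2_decomp A) measureU; first last.
- by apply/seteqP; split => // [[a b]] /= [[-> _] [+ _]].
- exact: measurableX.
- exact: measurableX.
rewrite [X in (X + _)%E]product_measure1E // [X in (_ + X)%E]product_measure1E //.
rewrite [X in (X * _ + _)%E]coinE [X in (_ * X + _)%E]coinE.
rewrite [X in (_ + X * _)%E]coinE [X in (_ + _ * X)%E]coinE -!EFinM -EFinD; congr EFin.
have inA a b : (b \in [set b | A (a, b)]) = ((a, b) \in A) by apply/idP/idP; rewrite !in_setE.
by rewrite !in_set1 /= !inA; field.
Qed.

Lemma in_preimage {U : Type} (f : bool * bool -> U) (B : set U) x :
  (x \in f @^-1` B) = (f x \in B).
Proof. by apply/idP/idP; rewrite !in_setE. Qed.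

Lemma in_set_eq {T : Type} (f : T -> R) s x : (x \in [set w | f w = s]) = (f x == s).
Proof. by apply/idP/eqP; rewrite in_setE. Qed.

Lemma xor_natr (a b : bool) : a%:R + b%:R - 2 * a%:R * b%:R = (a (+) b)%:R :> R.
Proof. by case: a; case: b => /=; ring. Qed.

Definition xor_U (w : bool * bool) : 2.-tuple R := [tuple w.1%:R; w.2%:R].
Definition xor_V (w : bool * bool) : 2.-tuple R := [tuple (w.1 (+) w.2)%:R; w.1%:R].
Definition xor_Vint (s : R) (w : bool * bool) : 2.-tuple R :=
  [tuple s + w.2%:R - 2 * s * w.2%:R; s].
Definition xor_h (xs : 1.-tuple R * R) : R := tnth xs.1 ord0.
Definition xor_Sset : seq R := [:: 0; 1].

Lemma zeror_eq1 : (0 == 1 :> R) = false. Proof. by rewrite eq_sym oner_eq0. Qed.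

Lemma tnth_pair0 (a b : R) : tnth [tuple a; b] ord0 = a. Proof. by []. Qed.
Lemma tnth_pairS (a b : R) : tnth [tuple a; b] (Snode 1) = b. Proof. by []. Qed.
Lemma tnth_pairX (a b : R) (i : 'I_1) : tnth [tuple a; b] (Xnode i) = a.
Proof. by rewrite (ord1 i). Qed.

Lemma xor_setting : setting coins xor_scm xor_U xor_V xor_Sset.
Proof.
split.
- exact: measurable_fun_bool2.
- split; first exact: measurable_fun_bool2.
    apply: aeW => w i; have [->|/neq_Snode_Xnode [j ->]] := eqVneq i (Snode 1).
      by rewrite tnth_pairS.
    by rewrite (ord1 j) tnth_pairX /= /xor_G /= xor_natr.
  move=> V' _; apply: filterS => w V'w.
  have V'S := V'w (Snode 1); have V'X := V'w (Xnode ord0).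
  rewrite /= /xor_G /= in V'S V'X; rewrite V'S in V'X.
  apply: eq_from_tnth => i; have [->|/neq_Snode_Xnode [j ->]] := eqVneq i (Snode 1).
    by rewrite tnth_pairS V'S.
  by rewrite (ord1 j) tnth_pairX V'X xor_natr.
- by move=> w; rewrite /Sof tnth_pairS /xor_Sset; case: w.1; rewrite !inE eqxx ?orbT.
- move=> s; rewrite !inE => /orP[] /eqP ->; rewrite coinsE !in_set_eq /Sof /= !tnth_pairS /=.
  all: by rewrite ?eqxx ?oner_eq0 ?zeror_eq1 lte_fin /=; lra.
Qed.

Lemma xor_RE : RE coins xor_scm xor_U.
Proof.
split; last by move=> i; rewrite /= /xor_endo_par eqxx finset.in_set0.
have -> : Ucoords xor_U [set j | j \in exo_par xor_scm (Snode 1)] =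
    [set fun w => tnth (xor_U w) ord0].
  apply/seteqP; split => f /=.
    by case=> j /=; rewrite /xor_exo_par eqxx finset.in_set1 => /eqP -> ->.
  by move=> ->; exists ord0; rewrite //= /xor_exo_par eqxx finset.in_set1.
have -> : Ucoords xor_U [set j | exists i : 'I_1, j \in exo_par xor_scm (Xnode i)] =
    [set fun w => tnth (xor_U w) ord_max].
  apply/seteqP; split => f /=.
    by case=> j /= [i]; rewrite (ord1 i) /xor_exo_par /= finset.in_set1 => /eqP -> ->.
  by move=> ->; exists ord_max => //; exists ord0; rewrite /= /xor_exo_par /= finset.in_set1.
apply: indep_sigma_gen1 => B C _ _.
rewrite !coinsE !in_setI !in_preimage !tnth_pair0 !tnth_pairS -EFinM; congr EFin.
by do 2 case: (_ \in B); do 2 case: (_ \in C); rewrite /=; field.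
Qed.

Lemma xor_intervened s :
  s \in xor_Sset -> intervened_solution coins xor_scm xor_U s (xor_Vint s).
Proof.
move=> _; split; first exact: measurable_fun_bool2.
by apply: aeW => w; split => // i; rewrite (ord1 i) tnth_pairX /= /xor_G /= tnth_pairS.
Qed.

Lemma measurable_xor_h : measurable_fun setT xor_h.
Proof. exact: measurableT_comp (measurable_tnth _) measurable_fst. Qed.

Lemma xor_parity : statistical_parity coins xor_V xor_h.
Proof.
apply: indep_sigma_gen1 => B C _ _.
rewrite !coinsE !in_setI !in_preimage /xor_h /Xof /Sof /=.
rewrite !tnth_mktuple !tnth_pairX !tnth_pairS -EFinM; congr EFin.
by do 2 case: (_ \in B); do 2 case: (_ \in C); rewrite /=; field.
Qed.

(* Given S = 0 and X = 1, the prediction is 1 in the factual world (where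
   U_2 = 1) and 0 in the world where S is set to 1. *)
Lemma xor_not_cf : ~ counterfactually_fair coins xor_V xor_Vint xor_Sset xor_h.
Proof.
have S0 : (0 : R) \in xor_Sset by rewrite mem_head.
have S1 : (1 : R) \in xor_Sset by rewrite !inE eqxx orbT.
move=> /(_ 0 1 S0 S1) [K [K' [YK Y'K' [N [mN N0 KK'N]]]]].
have KK' x : ~ N x -> forall B, measurable B -> K x B = K' x B.
  by move=> nNx; apply: contrapT => /KK'N.
have [_ _ _ PS_gt0] := xor_setting.
have := cond_X_law_null (measurable_bool2 _) (PS_gt0 0 S0) N0.
rewrite coinsE !in_setI !in_preimage !in_set_eq /Sof /= !tnth_pairS /= ?eqxx ?oner_eq0.
move=> [] N00; have {N00} [nN0 nN1] : (Xof xor_V (false, false) \in N) = false /\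
    (Xof xor_V (false, true) \in N) = false.
  by move: N00; do 2 case: (_ \in N) => //=; lra.
pose A := ~` N `&` [set x : 1.-tuple R | tnth x ord0 = 1].
have mA : measurable A.
  apply: measurableI; first exact: measurableC.
  by rewrite -[X in measurable X]setTI; exact: measurable_tnth (measurable_set1 1).
have KK'A x : A x -> forall B, measurable B -> K x B = K' x B.
  by move=> [nNx _]; exact: KK'.
have := cond_law_versions_eq YK Y'K' KK'A mA (measurable_set1 1).
rewrite !coinsE !in_setI !in_preimage !in_set1 !in_setC !in_set_eq /Sof /= !tnth_pairS /=.
rewrite /Yhat_do /xor_h /Xof !tnth_mktuple !tnth_pairX /= nN0 nN1 /=.
rewrite oner_eq0 zeror_eq1 !eqxx /=.
have -> : 0 + 1 - 2 * 0 * 1 = 1 :> R by ring.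
have -> : 1 + 1 - 2 * 1 * 1 = 0 :> R by ring.
by rewrite eqxx zeror_eq1 => -[]; lra.
Qed.

End counterexample.

Theorem proposition6 :
  (forall (R : realType) (d m : nat) (dO : measure_display) (O : measurableType dO)
     (P : probability O R) (M : SCM R d m) (U : O -> m.-tuple R)
     (V : O -> (d.+1).-tuple R) (Vint : R -> O -> (d.+1).-tuple R)
     (Sset : seq R) (h : d.-tuple R * R -> R),
     acyclic M -> RE P M U -> setting P M U V Sset ->
     (forall s, s \in Sset -> intervened_solution P M U s (Vint s)) ->
     measurable_fun [set: d.-tuple R * R] h ->
     counterfactually_fair P V Vint Sset h ->
     statistical_parity P V h)
  /\
  (forall R : realType,
     exists (d m : nat) (dO : measure_display) (O : measurableType dO)
       (P : probability O R) (M : SCM R d m) (U : O -> m.-tuple R)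
       (V : O -> (d.+1).-tuple R) (Vint : R -> O -> (d.+1).-tuple R)
       (Sset : seq R) (h : d.-tuple R * R -> R),
       [/\ acyclic M, RE P M U, setting P M U V Sset,
           (forall s, s \in Sset -> intervened_solution P M U s (Vint s)) &
           measurable_fun [set: d.-tuple R * R] h] /\
       statistical_parity P V h /\
       ~ counterfactually_fair P V Vint Sset h).
Proof.
split.
  move=> R d m dO O P M U V Vint Sset h acM REM [mU [mV solV _] SsetV PS_gt0].
  exact: statistical_parity_of_cf.
move=> R; exists 1%N, 2%N, _, _, (coins R), (xor_scm R), (xor_U R), (xor_V R),
  (xor_Vint R), (xor_Sset R), (xor_h R).
split; first split.
- exact: xor_scm_acyclic.
- exact: xor_RE.
- exact: xor_setting.
- exact: xor_intervened.
- exact: measurable_xor_h.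
by split; [exact: xor_parity|exact: xor_not_cf].
Qed.
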